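(* Let $p,q,s$ be complex numbers with $p\neq 0$, $q\neq 0$, $s^2\neq -1$, and let $A=A(S^4_{p,q,s})$ be the unital complex algebra generated by $\xi,\eta,\zeta,U,V$ subject to the relations $$\zeta\xi=q^2\xi\zeta,\quad \eta\zeta=q^2\zeta\eta,\quad \xi U=pU\xi,\quad V\xi=p\xi V,\quad \eta V=pV\eta,\quad U\eta=p\eta U,$$ $$UV=VU,\quad U\zeta=\zeta U,\quad V\zeta=\zeta V,$$ $$\xi\eta=(\zeta-1)(\zeta+s^2)+UV,\qquad \eta\xi=(q^2\zeta-1)(q^2\zeta+s^2)+UV.$$ Let $e\in \mathrm{Mat}_4(A)$ be $$e=\frac{1}{1+s^2}\begin{pmatrix}1-\zeta&0&U&\xi\\ 0&1-q^2\zeta&-\eta&-pV\\ V&\xi&s^2+\zeta&0\\ -\eta&-p^{-1}U&0&s^2+q^2\zeta\end{pmatrix}.$$ Then $e^2=e$. Moreover, if $q^2$ and $s^2$ are real and $|p|=1$, and $A$ is equipped with the involution determined by $\zeta^*=\zeta$, $\xi^*=-\eta$, $U^*=V$, then $e^*=e$, where $*$ on $\mathrm{Mat}_4(A)$ is the involution of $A$ applied entrywise combined with matrix transposition. *)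

From HB Require Import structures.
From mathcomp Require Import all_boot all_order all_algebra.
Set Implicit Arguments. Unset Strict Implicit. Unset Printing Implicit Defensive.
Import Order.TTheory GRing.Theory Num.Theory.
Local Open Scope ring_scope.

Definition S4_rels (C : fieldType) (A : algType C) (p q s : C)
    (xi eta zeta U V : A) : Prop :=
  zeta * xi = q ^+ 2 *: (xi * zeta) /\
  eta * zeta = q ^+ 2 *: (zeta * eta) /\
  xi * U = p *: (U * xi) /\
  V * xi = p *: (xi * V) /\
  eta * V = p *: (V * eta) /\
  U * eta = p *: (eta * U) /\
  U * V = V * U /\
  U * zeta = zeta * U /\
  V * zeta = zeta * V /\
  xi * eta = (zeta - 1) * (zeta + (s ^+ 2)%:A) + U * V /\
  eta * xi = (q ^+ 2 *: zeta - 1) * (q ^+ 2 *: zeta + (s ^+ 2)%:A) + U * V.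

Definition e_mx (C : fieldType) (A : algType C) (p q s : C)
    (xi eta zeta U V : A) : 'M[A]_4 :=
  \matrix_(i < 4, j < 4) ((1 + s ^+ 2)^-1 *:
    nth 0 (nth [::]
      [:: [:: 1 - zeta; 0; U; xi];
          [:: 0; 1 - q ^+ 2 *: zeta; - eta; - (p *: V)];
          [:: V; xi; (s ^+ 2)%:A + zeta; 0];
          [:: - eta; - (p^-1 *: U); 0; (s ^+ 2)%:A + q ^+ 2 *: zeta]] i) j).

Definition is_star (C : numClosedFieldType) (A : algType C) (st : A -> A) : Prop :=
  [/\ forall x y, st (x + y) = st x + st y,
      forall (a : C) x, st (a *: x) = a^* *: st x,
      forall x y, st (x * y) = st y * st x &
      forall x, st (st x) = x].

Definition mx_star (A : ringType) (st : A -> A) (m : 'M[A]_4) : 'M[A]_4 :=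
  \matrix_(i < 4, j < 4) st (m j i).

From HB Require Import structures.
From mathcomp Require Import all_boot all_order all_algebra.
Import Order.TTheory GRing.Theory Num.Theory.

Local Open Scope ring_scope.

(* Write e = (1 + s^2)^-1 M.  Expanding M * M entry by entry, every entry is
   (1 + s^2) times the corresponding entry of M: off the diagonal the two
   products either cancel or combine by a commutation relation into a
   multiple (1 + s^2) of a generator, while on the diagonal the relations for
   xi eta and eta xi turn the entry into (1 - y)(1 + s^2) or (s^2 + y)(1 + s^2)
   with y = zeta or q^2 zeta.  Hence M^2 = (1 + s^2) M and e^2 = e.
   Self-adjointness is checked entrywise: the star swaps xi <-> -eta and
   U <-> V, fixes the real scalars q^2, s^2 and maps p to p^-1. *)

Section ScaledMatrices.

Variables (C : fieldType) (A : algType C).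

Lemma map_scale_mulmx m n k (a b : C) (M : 'M[A]_(m, n)) (N : 'M[A]_(n, k)) :
  map_mx ( *:%R a) M *m map_mx ( *:%R b) N = map_mx ( *:%R (a * b)) (M *m N).
Proof.
apply/matrixP => i j; rewrite !mxE scaler_sumr; apply: eq_bigr => l _.
by rewrite !mxE -scalerAl -scalerAr scalerA.
Qed.

Lemma map_scale_comp m n (a b : C) (M : 'M[A]_(m, n)) :
  map_mx ( *:%R a) (map_mx ( *:%R b) M) = map_mx ( *:%R (a * b)) M.
Proof. by apply/matrixP => i j; rewrite !mxE scalerA. Qed.

Lemma idempotent_scale_inv n (a : C) (M : 'M[A]_n) :
  a != 0 -> M *m M = map_mx ( *:%R a) M ->
  map_mx ( *:%R a^-1) M *m map_mx ( *:%R a^-1) M = map_mx ( *:%R a^-1) M.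
Proof.
by move=> a0 MM; rewrite map_scale_mulmx MM map_scale_comp -mulrA mulVf ?mulr1.
Qed.

Lemma sum_intertwine_l (S : C) (x y1 y2 : A) :
  y1 * x = x * y2 -> (1 - y1) * x + x * (S%:A + y2) = (1 + S) *: x.
Proof.
move=> y12; rewrite mulrBl mul1r mulrDr mulr_algr y12 (addrC (S *: x)).
by rewrite addrA subrK scalerDl scale1r.
Qed.

Lemma sum_intertwine_r (S : C) (x y1 y2 : A) :
  x * y1 = y2 * x -> x * (1 - y1) + (S%:A + y2) * x = (1 + S) *: x.
Proof.
move=> y12; rewrite mulrBr mulr1 mulrDl mulr_algl y12 (addrC (S *: x)).
by rewrite addrA subrK scalerDl scale1r.
Qed.

Lemma sqr1B_sub_quad (S : C) (y : A) :
  (1 - y) * (1 - y) - (y - 1) * (y + S%:A) = (1 + S) *: (1 - y).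
Proof.
by rewrite -mulNr opprB -mulrDr addrA subrK mulrDr mulr1 mulr_algr scalerDl scale1r.
Qed.

Lemma sqr_algD_sub_quad (S : C) (y : A) :
  (S%:A + y) * (S%:A + y) - (y - 1) * (y + S%:A) = (1 + S) *: (S%:A + y).
Proof.
rewrite -mulNr opprB (addrC y) -mulrDl addrACA subrr addr0 (addrC _ 1).
by rewrite mulrDl mul1r mulr_algl scalerDl scale1r.
Qed.

End ScaledMatrices.

Definition S4_mx {C : fieldType} {A : algType C} (p q s : C)
    (xi eta zeta U V : A) : 'M[A]_4 :=
  \matrix_(i < 4, j < 4)
    nth 0 (nth [::]
      [:: [:: 1 - zeta; 0; U; xi];
          [:: 0; 1 - q ^+ 2 *: zeta; - eta; - (p *: V)];
          [:: V; xi; (s ^+ 2)%:A + zeta; 0];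
          [:: - eta; - (p^-1 *: U); 0; (s ^+ 2)%:A + q ^+ 2 *: zeta]] i) j.

Lemma e_mxE (C : fieldType) (A : algType C) (p q s : C) (xi eta zeta U V : A) :
  e_mx p q s xi eta zeta U V
  = map_mx ( *:%R (1 + s ^+ 2)^-1) (S4_mx p q s xi eta zeta U V).
Proof. by apply/matrixP => i j; rewrite !mxE. Qed.

Section Idempotent.

Variables (C : fieldType) (A : algType C) (p q s : C) (xi eta zeta U V : A).
Hypothesis p0 : p != 0.
Hypothesis rels : S4_rels p q s xi eta zeta U V.

Let M := S4_mx p q s xi eta zeta U V.

Lemma S4_mx_sqr : M *m M = map_mx ( *:%R (1 + s ^+ 2)) M.
Proof.
have [zeta_xi [eta_zeta [xi_U [V_xi [eta_V [U_eta [U_V [U_zeta [V_zeta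
  [xi_eta eta_xi]]]]]]]]]] := rels.
apply/matrixP => i j; rewrite !mxE !big_ord_recl big_ord0 addr0 !mxE.
case: i => [[|[|[|[|?]]]] //= _]; case: j => [[|[|[|[|?]]]] //= _].
all: rewrite ?(mul0r, mulr0, add0r, addr0, scaler0).
- by rewrite mulrN xi_eta opprD (addrCA (U * V)) subrr addr0 sqr1B_sub_quad.
- by rewrite mulrN -scalerAr xi_U scalerA mulVf // scale1r subrr.
- exact: sum_intertwine_l.
- by rewrite sum_intertwine_l // zeta_xi -scalerAr.
- by rewrite mulrNN -scalerAl -eta_V mulNr addNr.
- rewrite mulrNN -scalerAl -scalerAr scalerA mulfV // scale1r -U_V mulNr.
  by rewrite eta_xi opprD subrK sqr1B_sub_quad.
- rewrite mulrN mulNr -opprD scalerN sum_intertwine_l //.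
  by rewrite eta_zeta scalerAl.
- rewrite mulrN mulNr -opprD scalerN sum_intertwine_l //.
  by rewrite -!scalerAl -!scalerAr V_zeta !scalerA mulrC.
- exact: sum_intertwine_r.
- by rewrite sum_intertwine_r // -scalerAr zeta_xi.
- rewrite mulrN xi_eta opprD -U_V (addrCA (U * V)) addrA subrK addrC.
  exact: sqr_algD_sub_quad.
- by rewrite mulrN -scalerAr -V_xi subrr.
- rewrite mulNr mulrN -opprD scalerN sum_intertwine_r //.
  by rewrite eta_zeta scalerAl.
- rewrite mulNr mulrN -opprD scalerN sum_intertwine_r //.
  by rewrite -!scalerAl -!scalerAr U_zeta !scalerA mulrC.
- by rewrite mulrNN -scalerAl U_eta scalerA mulVf // scale1r mulNr addNr.
- rewrite mulrNN -scalerAl -scalerAr scalerA mulVf // scale1r mulNr eta_xi.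
  by rewrite opprD addrA subrK addrC sqr_algD_sub_quad.
Qed.

End Idempotent.

Lemma conjC_norm1 (C : numClosedFieldType) (p : C) : `|p| = 1 -> p^* = p^-1.
Proof. by move=> p1; rewrite invC_norm p1 expr1n invr1 mul1r. Qed.

Section Star.

Variables (C : numClosedFieldType) (A : algType C) (st : A -> A).
Hypothesis st_star : is_star st.

Lemma starD x y : st (x + y) = st x + st y.
Proof. by case: st_star. Qed.

Lemma starZ (a : C) x : st (a *: x) = a^* *: st x.
Proof. by case: st_star. Qed.

Lemma starM x y : st (x * y) = st y * st x.
Proof. by case: st_star. Qed.

Lemma starK : involutive st.
Proof. by case: st_star. Qed.

Lemma star0 : st 0 = 0.
Proof. by apply: (addrI (st 0)); rewrite -starD !addr0. Qed.

Lemma starN x : st (- x) = - st x.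
Proof. by apply/eqP; rewrite -addr_eq0 -starD addNr star0. Qed.

Lemma star1 : st 1 = 1.
Proof. by have := starM (st 1) 1; rewrite mulr1 starK mulr1. Qed.

Lemma star_alg (a : C) : st a%:A = a^*%:A.
Proof. by rewrite starZ star1. Qed.

Lemma mx_star_map_scale (c : C) (M : 'M[A]_4) : c \is Num.real ->
  mx_star st (map_mx ( *:%R c) M) = map_mx ( *:%R c) (mx_star st M).
Proof. by move=> c_real; apply/matrixP => i j; rewrite !mxE starZ conj_Creal. Qed.

Variables (p q s : C) (xi eta zeta U V : A).
Hypotheses (q2_real : q ^+ 2 \is Num.real) (s2_real : s ^+ 2 \is Num.real).
Hypothesis p_norm1 : `|p| = 1.
Hypotheses (st_zeta : st zeta = zeta) (st_xi : st xi = - eta) (st_U : st U = V).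

Lemma S4_mx_self_adjoint :
  mx_star st (S4_mx p q s xi eta zeta U V) = S4_mx p q s xi eta zeta U V.
Proof.
have st_eta : st eta = - xi by rewrite -[eta]opprK -st_xi starN starK.
have st_V : st V = U by rewrite -st_U starK.
have conj_p : p^* = p^-1 by exact: conjC_norm1.
have conj_pV : (p^-1)^* = p by rewrite -conj_p conjCK.
have conj_q2 : (q ^+ 2)^* = q ^+ 2 := conj_Creal q2_real.
have conj_s2 : (s ^+ 2)^* = s ^+ 2 := conj_Creal s2_real.
apply/matrixP => i j; rewrite !mxE.
case: i => [[|[|[|[|?]]]] //= _]; case: j => [[|[|[|[|?]]]] //= _].
all: by rewrite ?(starD, starN, starZ, star0, star1, star_alg, st_zeta, st_xi,
  st_eta, st_U, st_V, conj_p, conj_pV, conj_q2, conj_s2, opprK).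
Qed.

End Star.

Theorem mainTheorem1 (C : numClosedFieldType) (A : algType C) (p q s : C)
    (xi eta zeta U V : A) :
  p != 0 -> q != 0 -> s ^+ 2 != -1 ->
  S4_rels p q s xi eta zeta U V ->
  e_mx p q s xi eta zeta U V *m e_mx p q s xi eta zeta U V
    = e_mx p q s xi eta zeta U V /\
  (q ^+ 2 \is Num.real -> s ^+ 2 \is Num.real -> `|p| = 1 ->
   forall st : A -> A, is_star st ->
   st zeta = zeta -> st xi = - eta -> st U = V ->
   mx_star st (e_mx p q s xi eta zeta U V) = e_mx p q s xi eta zeta U V).
Proof.
move=> p0 _ s2N1 rels; rewrite e_mxE.
have s2D1 : 1 + s ^+ 2 != 0 by rewrite addrC addr_eq0.
split; first exact/idempotent_scale_inv/S4_mx_sqr.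
move=> q2_real s2_real p_norm1 st st_star st_zeta st_xi st_U.
rewrite mx_star_map_scale ?S4_mx_self_adjoint //.
by rewrite realV realD ?real1.
Qed.
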